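(* For any two continuous functions $P,Q\colon[0,1]\to\mathbb{R}$, the Fréchet distance equals the interleaving distance of their sublevel-set functors: $d_{\mathrm F}(P,Q)=d_I(\overleftarrow{P},\overleftarrow{Q})$.
   Context: Fréchet distance: $d_{\mathrm F}(P,Q)=\inf_\mu\max_{t\in[0,1]}|P(t)-Q(\mu(t))|$, infimum over continuous increasing bijections $\mu\colon[0,1]\to[0,1]$. $\mathbb{R}_\le$ is the poset category of real numbers (a unique morphism $y\to y'$ iff $y\le y'$). $\mathcal U$ is the category whose objects are closed subsets of $[0,1]$ (including $\emptyset$) and whose morphisms are continuous increasing functions between them. For a continuous $P\colon[0,1]\to\mathbb{R}$, the functor $\overleftarrow{P}\colon\mathbb{R}_\le\to\mathcal U$ sends $y$ to $P^{-1}((-\infty,y])$ and $y\le y'$ to the inclusion map. For a functor $F\colon\mathbb{R}_\le\to\mathcal C$ and $\delta\ge0$, the shift $F[\delta]$ is given by $F[\delta](y)=F(y+\delta)$, $F[\delta](y\le y')=F(y+\delta\le y'+\delta)$; $\eta^{F,\delta}\colon F\Rightarrow F[\delta]$ is the natural transformation with components $F(y\le y+\delta)$; for a natural transformation $\varphi\colon F\Rightarrow G$, $\varphi[\delta]\colon F[\delta]\Rightarrow G[\delta]$ has components $\varphi_{y+\delta}$. A $\delta$-interleaving between $F,G$ is a pair of natural transformations $\varphi\colon F\Rightarrow G[\delta]$, $\psi\colon G\Rightarrow F[\delta]$ with $\psi[\delta]\circ\varphi=\eta^{F,2\delta}$ and $\varphi[\delta]\circ\psi=\eta^{G,2\delta}$.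 The interleaving distance $d_I(F,G)$ is the infimum of all $\delta\ge0$ for which a $\delta$-interleaving exists. *)

From HB Require Import structures.
From mathcomp Require Import all_boot all_order all_algebra.
From mathcomp Require Import all_classical all_reals all_analysis.
Set Implicit Arguments. Unset Strict Implicit. Unset Printing Implicit Defensive.
Import Order.TTheory GRing.Theory Num.Theory.
Import numFieldNormedType.Exports.
Local Open Scope classical_set_scope.
Local Open Scope ring_scope.

Section Defs.
Variable R : realType.

Definition unitI : set R := [set t | 0 <= t <= 1].

(* Reparametrizations: continuous increasing bijections [0,1] -> [0,1]
   (functions R -> R, only their restriction to [0,1] matters). *)
Definition reparam (mu : R -> R) : Prop :=
  [/\ {within unitI, continuous mu},
      {in unitI &, forall s t, s < t -> mu s < mu t} &
      set_bij unitI unitI mu].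

Definition frechet_dist (P Q : R -> R) : \bar R :=
  ereal_inf [set ereal_sup [set (`|P t - Q (mu t)|)%:E | t in unitI]
            | mu in reparam].

Definition sublevel (P : R -> R) (y : R) : set R :=
  [set t | unitI t /\ P t <= y].

(* Morphisms of the category U from A to B: continuous (weakly) increasing
   maps A -> B, represented by functions R -> R restricted to A. *)
Definition U_hom (A B : set R) (f : R -> R) : Prop :=
  [/\ set_fun A B f,
      {within A, continuous f} &
      {in A &, forall s t, s <= t -> f s <= f t}].

(* Natural transformation sublevel P => (sublevel Q)[delta]: components
   phi y : sublevel P y -> sublevel Q (y + delta) in U, natural w.r.t. the
   inclusion maps (naturality square: phi y' o incl = incl o phi y). *)
Definition nat_trans_shift (P Q : R -> R) (delta : R) (phi : R -> R -> R) : Prop :=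
  (forall y, U_hom (sublevel P y) (sublevel Q (y + delta)) (phi y)) /\
  (forall y y', y <= y' -> forall x, sublevel P y x -> phi y' x = phi y x).

(* delta-interleaving between the sublevel-set functors of P and Q:
   psi[delta] o phi = eta^{2 delta} and phi[delta] o psi = eta^{2 delta}
   (the components of eta are the inclusion maps). *)
Definition interleaving (P Q : R -> R) (delta : R) : Prop :=
  exists phi psi : R -> R -> R,
    [/\ nat_trans_shift P Q delta phi,
        nat_trans_shift Q P delta psi,
        (forall y x, sublevel P y x -> psi (y + delta) (phi y x) = x) &
        (forall y x, sublevel Q y x -> phi (y + delta) (psi y x) = x)].

Definition interleaving_dist (P Q : R -> R) : \bar R :=
  ereal_inf [set delta%:E | delta in [set d : R | 0 <= d /\ interleaving P Q d]].

End Defs.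

(* A reparametrization mu with |P - Q o mu| <= delta gives a delta-interleaving
   whose components are mu and its inverse at every level: the sublevel-set
   conditions are exactly the pointwise bound.  Conversely, above max P and
   max Q all sublevel sets are [0,1], so the components of a delta-interleaving
   at such a level Y are mutually inverse continuous increasing self-maps of
   [0,1], i.e. a reparametrization; by naturality the component at Y agrees at
   t with the component at level P t, which lands in the sublevel set of level
   P t + delta.  Hence |P - Q o mu| <= delta. *)
From mathcomp Require Import all_boot all_order all_algebra.
From mathcomp Require Import all_classical all_reals all_analysis.
From mathcomp Require Import lra.
Import numFieldNormedType.Exports.
Import Order.TTheory GRing.Theory Num.Theory.
Local Open Scope classical_set_scope.
Local Open Scope ring_scope.

Section Reparametrizations.
Set Implicit Arguments.
Variable R : realType.
Local Notation unitI := (@unitI R).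

Lemma unitIE : unitI = `[0, 1]%classic.
Proof. by apply/seteqP; split => x /=; rewrite /unitI /= in_itv. Qed.

Lemma unitI0 : unitI 0. Proof. by rewrite /unitI /= lexx ler01. Qed.

Lemma unitI1 : unitI 1. Proof. by rewrite /unitI /= lexx ler01. Qed.

Lemma reparam_mono (mu : R -> R) :
  reparam mu -> {in unitI &, {mono mu : s t / s <= t}}.
Proof. by case=> _ smu _; exact: le_mono_in. Qed.

Lemma reparam_of_cancel (f g : R -> R) :
  {within unitI, continuous f} -> {in unitI &, {homo f : s t / s <= t}} ->
  set_fun unitI unitI f -> set_fun unitI unitI g ->
  {in unitI, cancel f g} -> {in unitI, cancel g f} -> reparam f.
Proof.
move=> cf mf funf fung fK gK; have f_inj := can_in_inj fK.
split => //; first exact: inj_homo_lt_in.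
split => // z uz; exists (g z); first exact: fung.
by apply: gK; rewrite inE.
Qed.

Lemma reparam_inv (mu : R -> R) : reparam mu ->
  exists g, [/\ reparam g, {in unitI, cancel mu g} & {in unitI, cancel g mu}].
Proof.
move=> rmu; have [cmu _ [funmu injmu surjmu]] := rmu.
pose g z := xget 0 [set t | unitI t /\ mu t = z].
have gP z : unitI z -> unitI (g z) /\ mu (g z) = z.
  move=> uz; apply: (@xgetPex _ 0 [set t | unitI t /\ mu t = z]).
  by have [t ut mut] := surjmu z uz; exists t.
have fung : set_fun unitI unitI g by move=> z /gP[].
have gK : {in unitI, cancel g mu} by move=> z /set_mem /gP[].
have muK : {in unitI, cancel mu g}.
  move=> t /set_mem ut; have umut := funmu t ut.
  by apply: injmu; rewrite ?inE ?gK ?inE //; exact: fung.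
have mg : {in unitI &, {mono g : s t / s <= t}}.
  move=> s t us ut /=.
  by rewrite -{2}(gK s us) -{2}(gK t ut) (reparam_mono rmu) // inE;
    apply/fung/set_mem.
exists g; split => //; apply: (reparam_of_cancel (g := mu)) => //.
  2: by move=> s t us ut; rewrite mg.
rewrite unitIE; apply: segment_inc_surj_continuous.
  by move=> s t; rewrite !in_itv /= => us ut; apply: mg; rewrite inE.
move=> w; rewrite /= in_itv /= => /andP[g0w wg1].
have /fung/andP[g00 _] := unitI0; have /fung/andP[_ g11] := unitI1.
have uw : unitI w by apply/andP; split; lra.
exists (mu w); first by rewrite /= in_itv; exact: funmu.
by rewrite muK // inE.
Qed.

Lemma reparam_U_hom (mu : R -> R) (A B : set R) :
  reparam mu -> A `<=` unitI -> set_fun A B mu -> U_hom A B mu.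
Proof.
move=> rmu AI funmu; split => //.
  by case: rmu => cmu _ _; exact: continuous_subspaceW cmu.
by move=> s t /set_mem/AI us /set_mem/AI ut; rewrite (reparam_mono rmu) ?inE.
Qed.

End Reparametrizations.

Section Sublevels.
Set Implicit Arguments.
Variable R : realType.
Local Notation unitI := (@unitI R).

Lemma bounded_above (P : R -> R) : {within unitI, continuous P} ->
  exists M, forall t, unitI t -> P t <= M.
Proof.
rewrite unitIE => cP; have [c _ Pc] := EVT_max ler01 cP.
by exists (P c) => t ut; apply: Pc; rewrite in_itv.
Qed.

Lemma sublevelT (P : R -> R) (y : R) :
  (forall t, unitI t -> P t <= y) -> sublevel P y = unitI.
Proof. by move=> Py; apply/seteqP; split => t; [case | split => //; exact: Py]. Qed.

Lemma sublevel_shift (P Q f : R -> R) (d y : R) :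
  set_fun unitI unitI f -> (forall t, unitI t -> Q (f t) <= P t + d) ->
  set_fun (sublevel P y) (sublevel Q (y + d)) f.
Proof.
move=> funf Qf t [ut Pt]; split; first exact: funf.
by apply: le_trans (Qf t ut) _; rewrite lerD2r.
Qed.

Lemma nat_trans_shift_le (P Q : R -> R) (d : R) (phi : R -> R -> R) (y t : R) :
  nat_trans_shift P Q d phi -> unitI t -> P t <= y -> Q (phi y t) <= P t + d.
Proof.
move=> [Uphi natphi] ut Pty; have st : sublevel P (P t) t by [].
rewrite (natphi _ _ Pty t st).
by have [funphi _ _] := Uphi (P t); have [] := funphi t st.
Qed.

End Sublevels.

Section Interleavings.
Set Implicit Arguments.
Variables (R : realType) (P Q : R -> R).
Local Notation unitI := (@unitI R).

Lemma reparam_interleaving (mu : R -> R) (r : R) : reparam mu ->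
  (forall t, unitI t -> `|P t - Q (mu t)| <= r) -> interleaving P Q r.
Proof.
move=> rmu mur; have [g [rg muK gK]] := reparam_inv rmu.
have [_ _ [funmu _ _]] := rmu; have [_ _ [fung _ _]] := rg.
have Qmu t : unitI t -> Q (mu t) <= P t + r.
  by move=> /mur; rewrite ler_norml => /andP[? _]; lra.
have Pg z : unitI z -> P (g z) <= Q z + r.
  move=> uz; have := mur _ (fung z uz).
  by rewrite gK ?inE // ler_norml => /andP[_ ?]; lra.
exists (fun=> mu), (fun=> g); split.
- split=> // y; apply: reparam_U_hom => //; first by move=> ? [].
  exact: sublevel_shift.
- split=> // y; apply: reparam_U_hom => //; first by move=> ? [].
  exact: sublevel_shift.
- by move=> y x [ux _]; rewrite muK // inE.
- by move=> y x [ux _]; rewrite gK // inE.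
Qed.

Lemma interleaving_dist_le_sup (mu : R -> R) : reparam mu ->
  (interleaving_dist P Q <= ereal_sup [set `|P t - Q (mu t)|%:E | t in unitI])%E.
Proof.
move=> rmu; set s := ereal_sup _.
have ub t : unitI t -> (`|P t - Q (mu t)|%:E <= s)%E.
  by move=> ut; apply: ereal_sup_ubound; exists t.
have s_ge0 : (0 <= s)%E by apply: le_trans (ub 0 (unitI0 R)).
move: ub s_ge0; case: s => [r| |] ub s_ge0; [|exact: leey|by []].
apply: ereal_inf_lbound; exists r => //; split; first by rewrite -lee_fin.
by apply: (reparam_interleaving _ rmu) => t /ub; rewrite lee_fin.
Qed.

Lemma interleaving_reparam (d : R) : 0 <= d ->
  {within unitI, continuous P} -> {within unitI, continuous Q} ->
  interleaving P Q d ->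
  exists2 f, reparam f & forall t, unitI t -> `|P t - Q (f t)| <= d.
Proof.
move=> d_ge0 cP cQ [phi [psi [phiN psiN psi_phi phi_psi]]].
have [[MP PM] [MQ QM]] := (bounded_above cP, bounded_above cQ).
pose Y := Num.max MP MQ.
have PY t : unitI t -> P t <= Y by move=> /PM; rewrite le_max => ->.
have QY t : unitI t -> Q t <= Y by move=> /QM; rewrite le_max orbC => ->.
have YYd : Y <= Y + d by rewrite lerDl.
have PYd t : unitI t -> P t <= Y + d by move=> /PY /le_trans; apply.
have QYd t : unitI t -> Q t <= Y + d by move=> /QY /le_trans; apply.
have [[funf cf mf] [fung _ _]] := (phiN.1 Y, psiN.1 Y).
rewrite !sublevelT // in funf cf mf fung.
have phiK : {in unitI, cancel (phi Y) (psi Y)}.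
  move=> t /set_mem ut; have := psi_phi Y t (conj ut (PY t ut)).
  by rewrite (psiN.2 _ _ YYd) //; split; [exact: funf | exact/QY/funf].
have psiK : {in unitI, cancel (psi Y) (phi Y)}.
  move=> t /set_mem ut; have := phi_psi Y t (conj ut (QY t ut)).
  by rewrite (phiN.2 _ _ YYd) //; split; [exact: fung | exact/PY/fung].
exists (phi Y); first exact: (reparam_of_cancel (g := psi Y)).
move=> t ut; rewrite ler_norml.
have := nat_trans_shift_le Y phiN ut (PY t ut).
have := nat_trans_shift_le Y psiN (funf t ut) (QY _ (funf t ut)).
rewrite phiK ?inE // => ? ?; apply/andP; split; lra.
Qed.

Lemma frechet_dist_le_interleaving (d : R) : 0 <= d ->
  {within unitI, continuous P} -> {within unitI, continuous Q} ->
  interleaving P Q d -> (frechet_dist P Q <= d%:E)%E.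
Proof.
move=> d_ge0 cP cQ /(interleaving_reparam d_ge0 cP cQ) [f rf fd].
apply: (@le_trans _ _ (ereal_sup [set `|P t - Q (f t)|%:E | t in unitI])).
  by apply: ereal_inf_lbound; exists f.
by apply: ge_ereal_sup => _ [t ut <-]; rewrite lee_fin fd.
Qed.

End Interleavings.

Theorem theorem36 (R : realType) (P Q : R -> R) :
  {within @unitI R, continuous P} -> {within @unitI R, continuous Q} ->
  frechet_dist P Q = interleaving_dist P Q.
Proof.
move=> cP cQ; apply/le_anti/andP; split.
- apply: le_ereal_inf_tmp => _ [d [d_ge0 dPQ] <-].
  exact: frechet_dist_le_interleaving.
- apply: le_ereal_inf_tmp => _ [mu rmu <-].
  exact: interleaving_dist_le_sup.
Qed.
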